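(* In the finite-horizon setting below, fix $(s,a)\in\mathcal{K}$ and a policy $\pi=(\pi_0,\dots,\pi_{H-1})$. Define $u^\pi,u^*\in\mathbb{R}^H$ by $u_h^\pi=(\widehat{P}_\mathcal{K}(\cdot|s,a)-P(\cdot|s,a))\widehat{V}^\pi_{h+1}$ and $u_h^*=(\widehat{P}_\mathcal{K}(\cdot|s,a)-P(\cdot|s,a))\widehat{V}^*_{h+1}$ for $h\in\{0,\dots,H-1\}$. Then for all $h\in\{0,\dots,H-1\}$: $$\widehat{Q}_h^\pi=\widetilde{Q}^\pi_{h,u^\pi},\quad\widehat{Q}_h^*=\widetilde{Q}^{\widehat{\pi}^*}_{h,u^*}=\widetilde{Q}^*_{h,u^*},\quad|u_h^\pi|\le H-h-1,\quad|u_h^*|\le H-h-1.$$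
   Context: A finite-horizon MDP $(\mathcal{S},\mathcal{A},P,(r_h)_{h<H},H)$ has finite $\mathcal{S},\mathcal{A}$, transition kernel $P$, horizon $H$ and step-dependent rewards $r_h$. For a nonstationary policy $\pi=(\pi_0,\dots,\pi_{H-1})$, $\pi_h:\mathcal{S}\to\mathcal{A}$: $V_H^\pi\equiv0$, $Q_h^\pi(s',a')=r_h(s',a')+\sum_{s''}P(s''|s',a')V_{h+1}^\pi(s'')$, $V_h^\pi(s')=Q_h^\pi(s',\pi_h(s'))$; optimal functions $V_h^*,Q_h^*$ are the maxima over policies, attained by an optimal policy. The true model $M$ has stationary reward $r\in[0,1]$ and $P(s'|s,a)=\sum_k\phi_k(s,a)\psi_k(s')$ with the anchor-state assumption: anchors $\mathcal{K}=\{(s_k,a_k)\}_{k=1}^K$, $\lambda_k^{s,a}\ge0$, $\sum_k\lambda_k^{s,a}=1$, $\phi(s,a)=\sum_k\lambda_k^{s,a}\phi(s_k,a_k)$. $\widehat{P}_\mathcal{K}(\cdot|s_k,a_k)$ is the empirical distribution of $N$ samples from $P(\cdot|s_k,a_k)$; $\widehat{M}$ has kernel $\widehat{P}(s'|s'',a'')=\sum_k\lambda_k^{s'',a''}\widehat{P}_\mathcal{K}(s'|s_k,a_k)$ and reward $r$ at every step; hats denote its value/Q-functions, $\widehat{\pi}^*$ is its optimal policy. Auxiliary model: for $(s,a)=(s_j,a_j)\in\mathcal{K}$ and $u=(u_0,\dots,u_{H-1})\in\mathbb{R}^H$, $\widetilde{M}_{s,a,u}$ has kernel $\widetilde{P}(s'|s'',a'')=\sum_k\lambda_k^{s'',a''}\widetilde{P}_\mathcal{K}(s'|s_k,a_k)$,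 with $\widetilde{P}_\mathcal{K}=\widehat{P}_\mathcal{K}$ on anchors $k\ne j$ and $\widetilde{P}_\mathcal{K}(\cdot|s_j,a_j)=P(\cdot|s,a)$, and step-$h$ reward $r+u_h\Lambda^{s,a}$ where $\Lambda^{s,a}(s'',a'')=\lambda_j^{s'',a''}$. $\widetilde{Q}^\pi_{h,u}$, $\widetilde{Q}^*_{h,u}$ denote its Q-functions at step $h$. *)

From HB Require Import structures.
From mathcomp Require Import all_boot all_order all_algebra.
From mathcomp Require Import classical_sets reals.
Set Implicit Arguments. Unset Strict Implicit. Unset Printing Implicit Defensive.
Import Order.TTheory GRing.Theory Num.Theory.
Local Open Scope ring_scope.
Local Open Scope classical_set_scope.

Section FiniteHorizon.
Variables (R : realType) (S A : finType).

(* Kernel convention: P s a s' = P(s'|s,a).  Step rewards rw h s a = r_h(s,a).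
   Nonstationary policies: pi h s = pi_h(s) (only h < H matters). *)

(* Value with n steps remaining, starting at step h. *)
Fixpoint Vrem (P : S -> A -> S -> R) (rw : nat -> S -> A -> R)
  (pi : nat -> S -> A) (n h : nat) (s : S) : R :=
  match n with
  | 0 => 0
  | n'.+1 => rw h s (pi h s) + \sum_(s' : S) P s (pi h s) s' * Vrem P rw pi n' h.+1 s'
  end.

Definition Vpi P rw (H : nat) pi (h : nat) (s : S) : R := Vrem P rw pi (H - h) h s.

Definition Qpi P rw (H : nat) pi (h : nat) (s : S) (a : A) : R :=
  rw h s a + \sum_(s' : S) P s a s' * Vpi P rw H pi h.+1 s'.

Definition Vstar P rw (H : nat) (h : nat) (s : S) : R :=
  sup (range (fun pi : nat -> S -> A => Vpi P rw H pi h s)).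
Definition Qstar P rw (H : nat) (h : nat) (s : S) (a : A) : R :=
  sup (range (fun pi : nat -> S -> A => Qpi P rw H pi h s a)).

Variable K : nat.

Definition anchor_kernel (lam : S -> A -> 'I_K -> R) (PK : 'I_K -> S -> R)
  : S -> A -> S -> R :=
  fun s'' a'' s' => \sum_(k < K) lam s'' a'' k * PK k s'.

Definition empirical (N : nat) (smp : 'I_K -> 'I_N -> S) : 'I_K -> S -> R :=
  fun k s' => (\sum_(i < N) ((smp k i == s') : nat)%:R) / N%:R.

(* Auxiliary anchor distributions: anchor j replaced by the true P(.|s,a). *)
Definition tildePK (PK : 'I_K -> S -> R) (j : 'I_K) (Pj : S -> R) : 'I_K -> S -> R :=
  fun k s' => if k == j then Pj s' else PK k s'.

(* Auxiliary reward at step h: r + u_h * Lambda^{s,a}, Lambda(s'',a'') = lam_j^{s'',a''}. *)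
Definition tilde_reward (r : S -> A -> R) (lam : S -> A -> 'I_K -> R) (j : 'I_K)
  (u : nat -> R) : nat -> S -> A -> R :=
  fun h s'' a'' => r s'' a'' + u h * lam s'' a'' j.

End FiniteHorizon.

From HB Require Import structures.
From mathcomp Require Import all_boot all_order all_algebra.
From mathcomp Require Import classical_sets reals.
From mathcomp Require Import ring lra.
Import Order.TTheory GRing.Theory Num.Theory.
Local Open Scope ring_scope.

Set Implicit Arguments.
Unset Strict Implicit.
Unset Printing Implicit Defensive.

(* Splitting off anchor j writes the empirical kernel as
   Ptil + Lambda (PKhat(.|s,a) - P(.|s,a)), so a Bellman backup of V under
   Phat is the backup under Ptil plus the reward correction
   Lambda (PKhat(.|s,a) - P(.|s,a)) V.  By backward induction every policy
   thus has the same values in the empirical model and in the auxiliary model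
   with u = u^pi; since the empirical optimal values are those of pihat, this
   also covers Q^star.  In the auxiliary model with u = u^star no policy beats
   the empirical optimal values, because backing them up at step h+1 amounts
   to deviating from pihat for one step in the empirical model.  Finally u_h
   is a difference of two averages of a value function with range
   [0, H-h-1]. *)

Section StochasticVectors.
Variables (R : realFieldType) (T : finType).

Lemma sum_stoch_mul_bounds (w f : T -> R) (M : R) :
  (forall x, 0 <= w x) -> \sum_x w x = 1 -> (forall x, 0 <= f x <= M) ->
  0 <= \sum_x w x * f x <= M.
Proof.
move=> w_ge0 w_sum1 f_bounds; apply/andP; split.
  by apply: sumr_ge0 => x _; apply: mulr_ge0 => //; case/andP: (f_bounds x).
rewrite -[M]mul1r -w_sum1 mulr_suml; apply: ler_sum => x _.
by apply: ler_wpM2l => //; case/andP: (f_bounds x).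
Qed.

Lemma norm_sum_stoch_diff_mul_le (p q f : T -> R) (M : R) :
  (forall x, 0 <= p x) -> \sum_x p x = 1 ->
  (forall x, 0 <= q x) -> \sum_x q x = 1 ->
  (forall x, 0 <= f x <= M) ->
  `|\sum_x (p x - q x) * f x| <= M.
Proof.
move=> p_ge0 p_sum1 q_ge0 q_sum1 f_bounds.
have /andP[p_lo p_hi] := sum_stoch_mul_bounds p_ge0 p_sum1 f_bounds.
have /andP[q_lo q_hi] := sum_stoch_mul_bounds q_ge0 q_sum1 f_bounds.
under eq_bigr do rewrite mulrBl.
rewrite sumrB ler_norml; apply/andP; split; lra.
Qed.

End StochasticVectors.

Lemma sup_range_max (R : realType) (T : Type) (f : T -> R) (x0 : T) :
  (forall x, f x <= f x0) -> sup (range f) = f x0.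
Proof.
move=> f_le; have range_ub : ubound (range f) (f x0) by move=> _ [x _ <-].
apply/le_anti/andP; split; first by apply: ge_sup => //; exists (f x0), x0.
apply: sup_upper_bound; last by exists x0.
by split; [exists (f x0), x0 | exists (f x0)].
Qed.

Section PolicyValues.
Variables (R : realType) (S A : finType).
Implicit Types (P : S -> A -> S -> R) (rw : nat -> S -> A -> R)
  (pi : nat -> S -> A).

Lemma Vrem_tail P rw pi pi' n h s :
  (forall k, (h <= k)%N -> pi k = pi' k) ->
  Vrem P rw pi n h s = Vrem P rw pi' n h s.
Proof.
elim: n h s => [|n IH] h s eq_pi //=.
rewrite eq_pi //; congr (_ + _); apply: eq_bigr => s' _.
by rewrite IH // => k /ltnW; apply: eq_pi.
Qed.

Lemma Vpi_Qpi P rw H pi h s :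
  (h < H)%N -> Vpi P rw H pi h s = Qpi P rw H pi h s (pi h s).
Proof. by move=> hH; rewrite /Vpi -subnSK. Qed.

Lemma Vpi_horizon P rw H pi h s : (H <= h)%N -> Vpi P rw H pi h s = 0.
Proof. by rewrite /Vpi -subn_eq0 => /eqP ->. Qed.

Section BoundedRewards.
Variables (P : S -> A -> S -> R) (rw : nat -> S -> A -> R) (H : nat).
Hypothesis P_ge0 : forall s a s', 0 <= P s a s'.
Hypothesis P_sum1 : forall s a, \sum_s' P s a s' = 1.
Hypothesis rw_01 : forall h s a, 0 <= rw h s a <= 1.

Lemma Vrem_bounds pi n h s : 0 <= Vrem P rw pi n h s <= n%:R.
Proof.
elim: n h s => [|n IH] h s /=; first by rewrite lexx.
have /andP[r_ge0 r_le1] := rw_01 h s (pi h s).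
have /andP[avg_ge0 avg_le] :=
  sum_stoch_mul_bounds (P_ge0 s (pi h s)) (P_sum1 s (pi h s)) (IH h.+1).
by rewrite -natr1 addrC addr_ge0 ?lerD.
Qed.

Lemma Vpi_le_Vstar pi h s : Vpi P rw H pi h s <= Vstar P rw H h s.
Proof.
apply: sup_upper_bound; last by exists pi.
split; first by exists (Vpi P rw H pi h s), pi.
by exists (H - h)%:R => _ [p _ <-]; case/andP: (Vrem_bounds p (H - h) h s).
Qed.

Variable pihat : nat -> S -> A.
Hypothesis pihat_opt :
  forall h s, (h < H)%N -> Vpi P rw H pihat h s = Vstar P rw H h s.

Lemma Vstar_opt h s : Vstar P rw H h s = Vpi P rw H pihat h s.
Proof.
have [hH|Hh] := ltnP h H; first by rewrite pihat_opt.
by apply: sup_range_max => p; rewrite !Vpi_horizon.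
Qed.

Lemma Qstar_opt h s a : Qstar P rw H h s a = Qpi P rw H pihat h s a.
Proof.
apply: sup_range_max => p; rewrite lerD2l; apply: ler_sum => s' _.
by rewrite ler_wpM2l // -Vstar_opt Vpi_le_Vstar.
Qed.

(* Witnessed by the policy playing a at step h and pihat afterwards. *)
Lemma Bellman_le_Vstar h s a : (h < H)%N ->
  rw h s a + \sum_s' P s a s' * Vstar P rw H h.+1 s' <= Vstar P rw H h s.
Proof.
move=> hH; pose pi' k x := if k == h then a else pihat k x.
have pi'_tail k : (h.+1 <= k)%N -> pi' k = pihat k.
  by rewrite /pi'; case: eqP => // ->; rewrite ltnn.
apply: le_trans _ (Vpi_le_Vstar pi' h s); rewrite Vpi_Qpi // /Qpi /pi' eqxx.
rewrite lerD2l; apply: ler_sum => s' _.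
by rewrite Vstar_opt /Vpi (Vrem_tail _ _ _ _ pi'_tail).
Qed.

End BoundedRewards.
End PolicyValues.

Section KernelPerturbation.
Variables (R : realType) (S A : finType).
Variables (P Pt : S -> A -> S -> R) (L : S -> A -> R) (d : S -> R) (H : nat).
Hypothesis P_split : forall s a s', P s a s' = Pt s a s' + L s a * d s'.

Definition shifted_reward (rw : nat -> S -> A -> R) (u : nat -> R) :
  nat -> S -> A -> R := fun h s a => rw h s a + u h * L s a.

Lemma backup_split s a (f : S -> R) :
  \sum_s' P s a s' * f s' =
  \sum_s' Pt s a s' * f s' + L s a * \sum_s' d s' * f s'.
Proof.
rewrite mulr_sumr -big_split; apply: eq_bigr => s' _.
by rewrite P_split mulrDl mulrA.
Qed.

Section Evaluation.
Variables (rw : nat -> S -> A -> R) (pi : nat -> S -> A) (u : nat -> R).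
Hypothesis u_def : forall h, u h = \sum_s' d s' * Vpi P rw H pi h.+1 s'.

Lemma Qpi_shift_step h s a :
  (forall s', Vpi P rw H pi h.+1 s' = Vpi Pt (shifted_reward rw u) H pi h.+1 s') ->
  Qpi P rw H pi h s a = Qpi Pt (shifted_reward rw u) H pi h s a.
Proof.
move=> V_eq; rewrite /Qpi /shifted_reward backup_split -u_def.
under eq_bigr do rewrite V_eq.
by ring.
Qed.

Lemma Vpi_shift h s : Vpi P rw H pi h s = Vpi Pt (shifted_reward rw u) H pi h s.
Proof.
move Hh : (H - h)%N => n; elim: n h s Hh => [|n IH] h s Hh.
  by rewrite /Vpi Hh.
have hH : (h < H)%N by rewrite -subn_gt0 Hh.
rewrite !Vpi_Qpi //; apply: Qpi_shift_step => s'.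
by apply: IH; rewrite subnS Hh.
Qed.

Lemma Qpi_shift h s a :
  Qpi P rw H pi h s a = Qpi Pt (shifted_reward rw u) H pi h s a.
Proof. by apply: Qpi_shift_step => s'; apply: Vpi_shift. Qed.

End Evaluation.

Section Optimality.
Variables (rw : nat -> S -> A -> R) (pihat : nat -> S -> A) (u : nat -> R).
Hypothesis P_ge0 : forall s a s', 0 <= P s a s'.
Hypothesis P_sum1 : forall s a, \sum_s' P s a s' = 1.
Hypothesis Pt_ge0 : forall s a s', 0 <= Pt s a s'.
Hypothesis rw_01 : forall h s a, 0 <= rw h s a <= 1.
Hypothesis pihat_opt :
  forall h s, (h < H)%N -> Vpi P rw H pihat h s = Vstar P rw H h s.
Hypothesis u_def : forall h, u h = \sum_s' d s' * Vstar P rw H h.+1 s'.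

Lemma Vpi_shift_le_Vstar pi h s :
  Vpi Pt (shifted_reward rw u) H pi h s <= Vstar P rw H h s.
Proof.
move Hh : (H - h)%N => n; elim: n h s Hh => [|n IH] h s Hh.
  by rewrite (Vstar_opt pihat_opt) /Vpi Hh.
have hH : (h < H)%N by rewrite -subn_gt0 Hh.
apply: le_trans _ (Bellman_le_Vstar P_ge0 P_sum1 rw_01 pihat_opt s (pi h s) hH).
rewrite Vpi_Qpi // /Qpi /shifted_reward backup_split -u_def -addrA lerD2l.
rewrite addrC [u h * _]mulrC lerD2r; apply: ler_sum => s' _.
by rewrite ler_wpM2l //; apply: IH; rewrite subnS Hh.
Qed.

Lemma Qstar_shift_opt h s a :
  Qpi Pt (shifted_reward rw u) H pihat h s a =
  Qstar Pt (shifted_reward rw u) H h s a.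
Proof.
have u_opt h' : u h' = \sum_s' d s' * Vpi P rw H pihat h'.+1 s'.
  by rewrite u_def; apply: eq_bigr => s' _; rewrite (Vstar_opt pihat_opt).
apply/esym/sup_range_max => p; rewrite lerD2l; apply: ler_sum => s' _.
rewrite ler_wpM2l // -(Vpi_shift u_opt h.+1 s').
by have := Vpi_shift_le_Vstar p h.+1 s'; rewrite (Vstar_opt pihat_opt).
Qed.

End Optimality.
End KernelPerturbation.

Section AnchorKernels.
Variables (R : realType) (S A : finType) (K : nat).
Variable lam : S -> A -> 'I_K -> R.

Lemma anchor_kernel_ge0 (PK : 'I_K -> S -> R) :
  (forall s a k, 0 <= lam s a k) -> (forall k s', 0 <= PK k s') ->
  forall s a s', 0 <= anchor_kernel lam PK s a s'.
Proof. by move=> lam_ge0 PK_ge0 s a s'; apply: sumr_ge0 => k _; apply: mulr_ge0. Qed.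

Lemma anchor_kernel_sum1 (PK : 'I_K -> S -> R) :
  (forall s a, \sum_k lam s a k = 1) -> (forall k, \sum_s' PK k s' = 1) ->
  forall s a, \sum_s' anchor_kernel lam PK s a s' = 1.
Proof.
move=> lam_sum1 PK_sum1 s a; rewrite exchange_big /= -(lam_sum1 s a).
by apply: eq_bigr => k _; rewrite -mulr_sumr PK_sum1 mulr1.
Qed.

Lemma tildePK_ge0 (PK : 'I_K -> S -> R) j (Pj : S -> R) :
  (forall k s', 0 <= PK k s') -> (forall s', 0 <= Pj s') ->
  forall k s', 0 <= tildePK PK j Pj k s'.
Proof. by move=> PK_ge0 Pj_ge0 k s'; rewrite /tildePK; case: eqP. Qed.

Lemma anchor_kernel_tildePK (PK : 'I_K -> S -> R) j (Pj : S -> R) s a s' :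
  anchor_kernel lam PK s a s' =
  anchor_kernel lam (tildePK PK j Pj) s a s' + lam s a j * (PK j s' - Pj s').
Proof.
rewrite /anchor_kernel (bigD1 j) //= [in RHS](bigD1 j) //= /tildePK eqxx.
under [X in _ = _ + X + _]eq_bigr => k /negbTE -> do [].
by ring.
Qed.

Lemma empirical_ge0 N (smp : 'I_K -> 'I_N -> S) k s' :
  0 <= empirical R smp k s'.
Proof. by apply: divr_ge0 => //; apply: sumr_ge0. Qed.

Lemma empirical_sum1 N (smp : 'I_K -> 'I_N -> S) k :
  (0 < N)%N -> \sum_s' empirical R smp k s' = 1.
Proof.
move=> N_gt0; rewrite -mulr_suml exchange_big /=.
have hit_once i : \sum_s' ((smp k i == s') : nat)%:R = 1 :> R.
  rewrite (bigD1 (smp k i)) //= eqxx big1 ?addr0 // => s'.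
  by rewrite eq_sym => /negbTE ->.
by rewrite (eq_bigr _ (fun i _ => hit_once i)) sumr_const card_ord mulfV
  // pnatr_eq0 -lt0n.
Qed.

End AnchorKernels.

Theorem lemma18 (R : realType) (S A : finType) (H K N : nat)
  (P : S -> A -> S -> R) (r : S -> A -> R)
  (phi : S -> A -> 'I_K -> R) (psi : 'I_K -> S -> R)
  (sk : 'I_K -> S) (ak : 'I_K -> A) (lam : S -> A -> 'I_K -> R)
  (smp : 'I_K -> 'I_N -> S)
  (j : 'I_K) (pi pihat : nat -> S -> A) :
  (* P is a transition kernel *)
  (forall s a s', 0 <= P s a s') ->
  (forall s a, \sum_(s' : S) P s a s' = 1) ->
  (* low-rank factorization *)
  (forall s a s', P s a s' = \sum_(k < K) phi s a k * psi k s') ->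
  (* rewards in [0,1] *)
  (forall s a, 0 <= r s a <= 1) ->
  (* anchor-state assumption *)
  (forall s a k, 0 <= lam s a k) ->
  (forall s a, \sum_(k < K) lam s a k = 1) ->
  (forall s a k', phi s a k' = \sum_(k < K) lam s a k * phi (sk k) (ak k) k') ->
  (0 < N)%N ->
  let PKhat := empirical R smp in
  let Phat := anchor_kernel lam PKhat in
  let rhat := fun (_ : nat) => r in
  let Ptil := anchor_kernel lam (tildePK PKhat j (P (sk j) (ak j))) in
  (* pihat is an optimal policy of Mhat *)
  (forall h s, (h < H)%N -> Vpi Phat rhat H pihat h s = Vstar Phat rhat H h s) ->
  let upi := fun h : nat =>
    \sum_(s' : S) (PKhat j s' - P (sk j) (ak j) s') * Vpi Phat rhat H pi h.+1 s' in
  let ustar := fun h : nat =>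
    \sum_(s' : S) (PKhat j s' - P (sk j) (ak j) s') * Vstar Phat rhat H h.+1 s' in
  forall h : nat, (h < H)%N ->
    (forall s a, Qpi Phat rhat H pi h s a
                 = Qpi Ptil (tilde_reward r lam j upi) H pi h s a) /\
    (forall s a, Qstar Phat rhat H h s a
                 = Qpi Ptil (tilde_reward r lam j ustar) H pihat h s a) /\
    (forall s a, Qpi Ptil (tilde_reward r lam j ustar) H pihat h s a
                 = Qstar Ptil (tilde_reward r lam j ustar) H h s a) /\
    `|upi h| <= (H - h.+1)%:R /\
    `|ustar h| <= (H - h.+1)%:R.
Proof.
move=> P_ge0 P_sum1 _ r_01 lam_ge0 lam_sum1 _ N_gt0 PKhat Phat rhat Ptil
  pihat_opt upi ustar h _.
have PKhat_ge0 := empirical_ge0 R smp.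
have PKhat_sum1 k := empirical_sum1 R smp k N_gt0.
have Phat_ge0 := anchor_kernel_ge0 lam_ge0 PKhat_ge0.
have Phat_sum1 := anchor_kernel_sum1 lam_sum1 PKhat_sum1.
have Ptil_ge0 :=
  anchor_kernel_ge0 lam_ge0 (tildePK_ge0 j PKhat_ge0 (P_ge0 (sk j) (ak j))).
have Phat_split := anchor_kernel_tildePK lam PKhat j (P (sk j) (ak j)).
have rhat_01 : forall h s a, 0 <= rhat h s a <= 1 by [].
have ustar_opt k : ustar k =
    \sum_s' (PKhat j s' - P (sk j) (ak j) s') * Vpi Phat rhat H pihat k.+1 s'.
  by apply: eq_bigr => s' _; rewrite (Vstar_opt pihat_opt).
have u_bound p : `|\sum_s' (PKhat j s' - P (sk j) (ak j) s') *
                    Vpi Phat rhat H p h.+1 s'| <= (H - h.+1)%:R.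
  apply: norm_sum_stoch_diff_mul_le => // s'.
  exact: Vrem_bounds Phat_ge0 Phat_sum1 rhat_01 p _ _ _.
split; [|split; [|split; [|split]]].
- by move=> s a; apply: (Qpi_shift Phat_split).
- move=> s a; rewrite (Qstar_opt Phat_ge0 Phat_sum1 rhat_01 pihat_opt).
  exact: (Qpi_shift Phat_split ustar_opt).
- by move=> s a; apply: (Qstar_shift_opt Phat_split).
- exact: u_bound.
- by rewrite ustar_opt; apply: u_bound.
Qed.
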